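(* Let $p$ be a prime, $q=p^l$ ($l\ge 1$), $m\ge 1$ an integer and $n=2m$. Let $\alpha$ be a primitive element of $\mathbb{F}_{q^n}$. For $0\leqslant r\leqslant n(q-1)$ and $k\in M_r$, let $$\Theta^{(r)}_k=\{\alpha^u \mid 0\leqslant u\leqslant q^n-1,\ \mathrm{wt}_q(u)=n(q-1)-r,\ |O(u)-E(u)|=k\}.$$ Then $$\big|\Theta^{(r)}_k\big|=\begin{cases}2\left(\sum_{i=0}^{m}(-1)^i\binom{m}{i}\binom{\frac{n(q-1)-r-k}{2}-iq+m-1}{\frac{n(q-1)-r-k}{2}-iq}\right)\left(\sum_{i=0}^{m}(-1)^i\binom{m}{i}\binom{\frac{n(q-1)-r+k}{2}-iq+m-1}{\frac{n(q-1)-r+k}{2}-iq}\right) & \text{if } k\neq 0,\\[2mm] \left(\sum_{i=0}^{m}(-1)^i\binom{m}{i}\binom{\frac{n(q-1)-r}{2}-iq+m-1}{\frac{n(q-1)-r}{2}-iq}\right)^2 & \text{if } k=0.\end{cases}$$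
   Context: Every integer $u$ with $0\leqslant u\leqslant q^n-1$ is written uniquely as $u=\sum_{i=0}^{n-1}u_iq^i$ with $u_i\in\{0,1,\dots,q-1\}$; $\mathrm{wt}_q(u)=\sum_{i=0}^{n-1}u_i$, $O(u)=\sum_{i \text{ odd}}u_i$, $E(u)=\sum_{i\text{ even}}u_i$ (indices $0\le i\le n-1$). For $0\leqslant r\leqslant n(q-1)$, $M_r$ is the set of even integers $k$ with $0\le k\le m(q-1)$ if $r$ is even, and the set of odd integers $k$ with $0\le k\le m(q-1)$ if $r$ is odd. Binomial coefficients $\binom{a}{b}$ with $b<0$ are taken to be $0$. *)

From mathcomp Require Import all_boot all_order all_algebra.
Set Implicit Arguments. Unset Strict Implicit. Unset Printing Implicit Defensive.
Import Order.TTheory GRing.Theory Num.Theory.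

Definition digit (q n u i : nat) : nat := (u %/ q ^ i) %% q.
Definition wtq (q n u : nat) : nat := \sum_(i < n) digit q n u i.
Definition Osum (q n u : nat) : nat := \sum_(i < n | odd i) digit q n u i.
Definition Esum (q n u : nat) : nat := \sum_(i < n | ~~ odd i) digit q n u i.

Local Open Scope ring_scope.

Definition Theta (F : finFieldType) (alpha : F) (q n r k : nat) : {set F} :=
  [set (alpha ^+ (nat_of_ord u))%R | u : 'I_(q ^ n)
     & (wtq q n u == (n * (q - 1) - r)%N) && (`|(Osum q n u)%:Z - (Esum q n u)%:Z|%N == k)%N].

Definition binz (m : nat) (t : int) : int :=
  match t with
  | Posz t' => ('C(t' + m - 1, t'))%:Z
  | Negz _ => 0%R
  end.

Definition Ssum (q m : nat) (a : int) : int :=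
  (\sum_(i < m.+1) (-1) ^+ i * ('C(m, i))%:Z * binz m (a - (i * q)%:Z))%R.

(* Since alpha has order q^n - 1, u |-> alpha^u is injective on [0, q^n) except
   that 0 and q^n - 1 collide; these have weights 0 and n(q - 1) > 0, so on
   exponents of a fixed weight the map is injective and |Theta| counts
   exponents.  Reading the even- and odd-position digits of u separately, the
   number of u < q^(2m) with E(u) = e and O(u) = o is c(e) c(o), where c(s)
   counts the m-tuples of digits in [0, q) with sum s.  Both c and the
   alternating sum Ssum satisfy c_{m+1}(s) = sum_{d<q} c_m(s - d) (for Ssum by
   Pascal's rule in both binomials) with the same initial values, hence agree.
   Finally E + O = wt and |O - E| = k force (E, O) to be (a, a + k) or
   (a + k, a) with a = (wt - k)/2, two distinct choices exactly when k <> 0. *)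

From mathcomp Require Import all_boot all_order all_algebra.
From mathcomp Require Import zify ring.
Import Order.TTheory GRing.Theory Num.Theory.
Set Implicit Arguments.
Unset Strict Implicit.
Unset Printing Implicit Defensive.

Lemma digitSS q n n' u i : digit q n u i.+2 = digit q n' (u %/ q ^ 2) i.
Proof. by rewrite /digit -divnMA -expnD. Qed.

Lemma EsumSS q n u : Esum q n.+2 u = digit q n u 0 + Esum q n (u %/ q ^ 2).
Proof.
rewrite /Esum big_mkcond !big_ord_recl /= [in RHS]big_mkcond add0n.
by congr (_ + _); apply: eq_bigr => i _; rewrite /bump /= !add1n /= negbK (digitSS q _ n).
Qed.

Lemma OsumSS q n u : Osum q n.+2 u = digit q n u 1 + Osum q n (u %/ q ^ 2).
Proof.
rewrite /Osum big_mkcond !big_ord_recl /= [in RHS]big_mkcond add0n.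
by congr (_ + _); apply: eq_bigr => i _; rewrite /bump /= !add1n /= negbK (digitSS q _ n).
Qed.

Lemma wtq_Osum_Esum q n u : wtq q n u = Osum q n u + Esum q n u.
Proof. exact: bigID. Qed.

Lemma wtq0 q n : wtq q n 0 = 0.
Proof. by rewrite /wtq big1 // => i _; rewrite /digit div0n mod0n. Qed.

Lemma wtq_pred_expn_gt0 q n : 1 < q -> 0 < n -> 0 < wtq q n (q ^ n).-1.
Proof.
move=> q_gt1; case: n => // n _.
rewrite /wtq big_ord_recl /digit expn0 divn1 ltn_addr //.
have qn_gt0 : 0 < q ^ n by rewrite expn_gt0; lia.
have -> : (q ^ n.+1).-1 = (q ^ n).-1 * q + q.-1 by rewrite expnS; nia.
by rewrite modnMDl modn_small; lia.
Qed.

Lemma low_digits q n d0 d1 v : d0 < q -> d1 < q ->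
  let u := d0 + (d1 + v * q) * q in
  [/\ digit q n u 0 = d0, digit q n u 1 = d1 & u %/ q ^ 2 = v].
Proof.
move=> d0_lt d1_lt u; have q_gt0 : 0 < q by apply: leq_ltn_trans d0_lt.
have u_mod : u %% q = d0 by rewrite /u addnC modnMDl modn_small.
have u_div : u %/ q = d1 + v * q by rewrite /u divnDMl // divn_small.
rewrite /digit expn0 divn1 expn1 u_mod u_div expnS expn1 divnMA u_div.
by rewrite addnC modnMDl modn_small // divnMDl // divn_small ?addn0.
Qed.

Lemma eq_mod_le (N x y : nat) : x <= N -> y <= N -> x = y %[mod N] ->
  [\/ x = y, x = 0 /\ y = N | x = N /\ y = 0].
Proof.
rewrite [x <= N]leq_eqVlt [y <= N]leq_eqVlt => /predU1P[->|hx] /predU1P[->|hy].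
- by constructor.
- by rewrite modnn modn_small // => <-; constructor 3.
- by rewrite modnn modn_small // => ->; constructor 2.
- by rewrite !modn_small // => ->; constructor.
Qed.

Lemma card_Theta (F : finFieldType) (alpha : F) q n r k :
  1 < q -> 0 < n -> ((q ^ n).-1.-primitive_root alpha)%R ->
  #|Theta alpha q n r k| = \sum_(0 <= u < q ^ n)
     ((wtq q n u == n * (q - 1) - r)
      && (`|((Osum q n u)%:Z - (Esum q n u)%:Z)%R|%N == k)).
Proof.
move=> q_gt1 n_gt0 prim_alpha; rewrite /Theta card_in_imset; last first.
  move=> u v; rewrite !inE => /andP[/eqP wt_u _] /andP[/eqP wt_v _] /eqP.
  rewrite (eq_prim_root_expr prim_alpha) => /eqP uv; apply: val_inj.
  have le_pred (x : 'I_(q ^ n)) : x <= (q ^ n).-1.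
    by rewrite -ltnS prednK ?ltn_ord // expn_gt0; lia.
  have wt_pred := wtq_pred_expn_gt0 q_gt1 n_gt0.
  case: (eq_mod_le (le_pred u) (le_pred v) uv) => [//|[u0 vN]|[uN v0]].
  - by move: wt_pred; rewrite -vN wt_v -wt_u u0 wtq0.
  - by move: wt_pred; rewrite -uN wt_u -wt_v v0 wtq0.
rewrite -sum1_card big_mkcond big_mkord /=.
by apply: eq_bigr => u _; rewrite inE; case: ifP.
Qed.

Local Open Scope ring_scope.

Lemma alternating_binomial_sumS (R : comRingType) m (g : nat -> R) :
  \sum_(i < m.+2) (-1) ^+ i * 'C(m.+1, i)%:R * g i =
  \sum_(i < m.+1) (-1) ^+ i * 'C(m, i)%:R * (g i - g i.+1).
Proof.
rewrite big_ord_recl bin0.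
under eq_bigr => i _ do rewrite binS natrD mulrDr mulrDl.
rewrite big_split /= [X in _ + (X + _)]big_ord_recr /= bin_small // mulr0 mul0r addr0.
under [X in _ = X]eq_bigr => i _ do rewrite mulrBr.
rewrite sumrB [X in _ = X - _]big_ord_recl bin0.
have -> : \sum_(i < m.+1) (-1) ^+ i.+1 * 'C(m, i)%:R * g i.+1 =
          - \sum_(i < m.+1) (-1) ^+ i * 'C(m, i)%:R * g i.+1.
  by rewrite -sumrN; apply: eq_bigr => i _; rewrite exprS; ring.
by rewrite addrA.
Qed.

Lemma binzS m (t : int) : binz m.+1 t = binz m.+1 (t - 1) + binz m t.
Proof.
case: t => [[|t]|t] //.
- by rewrite /binz !bin0.
- have -> : Posz t.+1 - 1 = Posz t by lia.
  by rewrite /binz -PoszD addSn !addnS !subn1 /= binS PoszD addrC.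
Qed.

Lemma sum_binz m (t : int) j :
  \sum_(d < j) binz m (t - d%:Z) = binz m.+1 t - binz m.+1 (t - j%:Z).
Proof.
elim: j => [|j IHj]; first by rewrite big_ord0 subr0 subrr.
rewrite big_ord_recr /= IHj (binzS m (t - j%:Z)).
have -> : t - j%:Z - 1 = t - j.+1%:Z by lia.
ring.
Qed.

Lemma Ssum0 q (a : int) : Ssum q 0 a = (a == 0)%:R.
Proof.
rewrite /Ssum big_ord1 mul0n subr0 expr0 bin0 !mul1r.
by case: a => [[|a]|a] //; rewrite /binz addn0 subn1 bin_small.
Qed.

Lemma SsumS q m (a : int) : Ssum q m.+1 a = \sum_(d < q) Ssum q m (a - d%:Z).
Proof.
rewrite /Ssum; under eq_bigr do rewrite -natz.
rewrite (@alternating_binomial_sumS _ m (fun i => binz m.+1 (a - (i * q)%:Z))).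
have sub_multS i : a - (i.+1 * q)%:Z = a - (i * q)%:Z - q%:Z by lia.
under eq_bigr => i _ do rewrite sub_multS -sum_binz mulr_sumr.
rewrite exchange_big; apply: eq_bigr => d _; apply: eq_bigr => i _.
by rewrite natz; congr (_ * binz _ _); lia.
Qed.

Lemma sum_nat_mul (V : nmodType) a b (F : nat -> V) :
  \sum_(0 <= u < b * a) F u = \sum_(0 <= v < b) \sum_(0 <= d < a) F (d + v * a)%N.
Proof.
rewrite big_nat_mul; apply: eq_bigr => v _.
by rewrite mulSn addnC -{1}(add0n (v * a)%N) big_addn addKn.
Qed.

Definition eo_count q m (e o : int) : int :=
  \sum_(0 <= u < q ^ (2 * m))
     (Esum q (2 * m) u == e :> int)%:R * (Osum q (2 * m) u == o :> int)%:R.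

Lemma eo_countS q m e o :
  eo_count q m.+1 e o = \sum_(d0 < q) \sum_(d1 < q) eo_count q m (e - d0%:Z) (o - d1%:Z).
Proof.
have eq_shift (x y : nat) (z : int) : (Posz (x + y) == z) = (Posz y == z - x%:Z).
  by apply/eqP/eqP; lia.
rewrite /eo_count.
have -> : (q ^ (2 * m.+1) = q ^ (2 * m) * (q * q))%N by rewrite mulnS !expnS mulnA mulnC.
rewrite sum_nat_mul exchange_big sum_nat_mul exchange_big big_mkord.
apply: eq_bigr => d0 _; rewrite big_mkord; apply: eq_bigr => d1 _.
apply: eq_bigr => v _.
have [digit0 digit1 high] := low_digits (2 * m) v (ltn_ord d0) (ltn_ord d1).
have -> : (d0 + d1 * q + v * (q * q) = d0 + (d1 + v * q) * q)%N by ring.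
by rewrite mulnS EsumSS OsumSS high digit0 digit1 !eq_shift.
Qed.

Lemma eo_count_Ssum q m e o : eo_count q m e o = Ssum q m e * Ssum q m o.
Proof.
elim: m e o => [|m IHm] e o.
  by rewrite /eo_count big_nat1 /Esum /Osum !big_ord0 !Ssum0 ![_ == 0]eq_sym.
rewrite eo_countS !SsumS mulr_suml; apply: eq_bigr => d0 _.
by rewrite mulr_sumr; apply: eq_bigr => d1 _; rewrite IHm.
Qed.

Lemma absdiff_indicatorE (E O W k : nat) (a : int) : W%:Z = 2 * a + k%:Z ->
  ((O + E == W)%N && (`|O%:Z - E%:Z|%N == k))%:R =
  (E%:Z == a)%:R * (O%:Z == a + k%:Z)%:R
    + (k != 0%N)%:R * ((E%:Z == a + k%:Z)%:R * (O%:Z == a)%:R) :> int.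
Proof.
move=> W_eq; do 7![case: eqP => ?];
  by rewrite /= ?mulr0 ?mul0r ?mulr1 ?addr0 ?add0r //; lia.
Qed.

Local Close Scope ring_scope.

Theorem lemma3p2 (p l m : nat) (F : finFieldType) (alpha : F) (r k : nat) :
  prime p -> 0 < l -> 0 < m ->
  #|F| = (p ^ l) ^ (2 * m) ->
  (((p ^ l) ^ (2 * m)).-1.-primitive_root alpha)%R ->
  r <= (2 * m) * (p ^ l - 1) ->
  k <= m * (p ^ l - 1) -> odd k = odd r ->
  let q := p ^ l in
  let n := 2 * m in
  let N := Posz (n * (q - 1)) in
  (Posz #|Theta alpha q n r k| =
  (if k != 0 then
     2 * Ssum q m ((N - r%:Z - k%:Z) %/ 2)%Z * Ssum q m ((N - r%:Z + k%:Z) %/ 2)%Z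
   else (Ssum q m ((N - r%:Z) %/ 2)%Z) ^+ 2))%R.
Proof.
move=> p_prime l_gt0 m_gt0 _ prim_alpha r_le _ odd_kr q n N.
have q_gt1 : (1 < q)%N by rewrite -(expn0 p) ltn_exp2l ?prime_gt1.
have n_gt0 : (0 < n)%N by rewrite muln_gt0.
have [t rk_eq] : exists t, (r + k = 2 * t)%N.
  by exists (r + k)./2; rewrite -{1}(odd_double_half (r + k)) oddD odd_kr addbb -mul2n.
set a : int := ((m * (q - 1))%:Z - t%:Z)%R.
have W_eq : Posz (n * (q - 1) - r) = (2 * a + k%:Z)%R by rewrite /a /n; lia.
have lo_eq : (N - r%:Z - k%:Z = 2 * a)%R by rewrite /N /a /n; lia.
have hi_eq : (N - r%:Z + k%:Z = 2 * (a + k%:Z))%R by rewrite /N /a /n; lia.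
rewrite card_Theta // -natz natr_sum.
under eq_bigr => u _ do rewrite wtq_Osum_Esum (absdiff_indicatorE _ _ W_eq).
rewrite big_split /= -mulr_sumr.
rewrite -/(eo_count q m a (a + k%:Z)) -/(eo_count q m (a + k%:Z) a).
rewrite !eo_count_Ssum.
case: ifPn => [k_neq0 | /negPn/eqP k0].
- by rewrite /= hi_eq lo_eq !mulKz //; ring.
- have {}k0 : k = 0%N := k0; subst k.
  by rewrite subr0 in lo_eq; rewrite lo_eq mulKz // mul0r addr0 addr0 expr2.
Qed.
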